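(* Let $k\ge1$, $\varepsilon>0$, and let $p,q\in\Delta([k]\times[k])$ have marginals $p_1,p_2$ and $q_1,q_2$ respectively. Then $$\|\mathcal T(p)-\mathcal T(q)\|_2^2=\frac{\alpha_H^4}{K^2}\|p-q\|_2^2+\frac{\alpha_H^2}{K^2}\big(\|p_1-q_1\|_2^2+\|p_2-q_2\|_2^2\big).$$ In particular, if $d_{TV}(p,q)>\gamma$ then $\|\mathcal T(p)-\mathcal T(q)\|_2>\frac{2\alpha_H^2\gamma}{Kk}$.
   Context: $d_{TV}(p,q)=\frac12\|p-q\|_1$. Hadamard Response (HR): let $K=2^{\lceil\log_2(k+1)\rceil}$ and let $H_K\in\{-1,1\}^{K\times K}$ be the Sylvester Hadamard matrix ($H_1=[1]$, $H_{2m}=\begin{bmatrix}H_m&H_m\\H_m&-H_m\end{bmatrix}$). Fix an injection $\phi:[k]\to\{2,\dots,K\}$ and set $C_x=\{z\in[K]:(H_K)_{\phi(x),z}=1\}$. On input $x\in[k]$, HR outputs $z\in[K]$ with probability $W(z\mid x)=\frac{2}{K}\cdot\frac{e^\varepsilon}{e^\varepsilon+1}$ if $z\in C_x$ and $\frac{2}{K}\cdot\frac{1}{e^\varepsilon+1}$ otherwise. $\alpha_H=(e^\varepsilon-1)/(e^\varepsilon+1)$. For $p\in\Delta([k]\times[k])$, $\mathcal T(p)\in\Delta([K]\times[K])$ is the distribution of $(Z_1,Z_2)$ where $(X_1,X_2)\sim p$ and $Z_1,Z_2$ are obtained by applying HR independently to $X_1$ and to $X_2$, i.e. $\mathcal T(p)(z_1,z_2)=\sum_{x_1,x_2}W(z_1\mid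 x_1)W(z_2\mid x_2)p(x_1,x_2)$. *)

(* real numbers with exp. All indices are 0-based:
   [k] = {0,...,k-1}, [K] = {0,...,K-1}; the paper's row 1 of H_K
   (the all-ones row) is our row 0, so phi maps into {1,...,K-1}. *)
From Stdlib Require Import Reals Arith List.
Open Scope R_scope.

Definition fsum (n : nat) (f : nat -> R) : R :=
  fold_right Rplus 0 (map f (seq 0 n)).

(* Sylvester Hadamard matrix H_{2^m}, entries indexed from 0:
   H_1 = [1], H_{2m} = [[H_m, H_m],[H_m, -H_m]]. *)
Fixpoint hadamard (m : nat) (i j : nat) : R :=
  match m with
  | O => 1
  | S m' =>
      let h := (2 ^ m')%nat in
      if (i <? h)%nat then
        (if (j <? h)%nat then hadamard m' i j else hadamard m' i (j - h))
      else
        (if (j <? h)%nat then hadamard m' (i - h) j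
         else - hadamard m' (i - h) (j - h))
  end.

Definition logK (k : nat) : nat := Nat.log2_up (k + 1).
Definition Kof (k : nat) : nat := (2 ^ logK k)%nat.

(* phi is an injection [k] -> {2,...,K} (1-based), i.e. {1,...,K-1} (0-based) *)
Definition valid_phi (k : nat) (phi : nat -> nat) : Prop :=
  (forall x, (x < k)%nat -> (1 <= phi x < Kof k)%nat) /\
  (forall x y, (x < k)%nat -> (y < k)%nat -> phi x = phi y -> x = y).

Definition HR_W (k : nat) (eps : R) (phi : nat -> nat) (z x : nat) : R :=
  if Req_EM_T (hadamard (logK k) (phi x) z) 1
  then (2 / INR (Kof k)) * (exp eps / (exp eps + 1))
  else (2 / INR (Kof k)) * (1 / (exp eps + 1)).

Definition alphaH (eps : R) : R := (exp eps - 1) / (exp eps + 1).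

Definition is_dist2 (k : nat) (p : nat -> nat -> R) : Prop :=
  (forall x1 x2, (x1 < k)%nat -> (x2 < k)%nat -> 0 <= p x1 x2) /\
  fsum k (fun x1 => fsum k (fun x2 => p x1 x2)) = 1.

Definition HR_T (k : nat) (eps : R) (phi : nat -> nat) (p : nat -> nat -> R)
    (z1 z2 : nat) : R :=
  fsum k (fun x1 => fsum k (fun x2 =>
    HR_W k eps phi z1 x1 * HR_W k eps phi z2 x2 * p x1 x2)).

Definition marg1 (k : nat) (p : nat -> nat -> R) (x : nat) : R :=
  fsum k (fun x2 => p x x2).
Definition marg2 (k : nat) (p : nat -> nat -> R) (x : nat) : R :=
  fsum k (fun x1 => p x1 x).

Definition l2sq1 (n : nat) (f g : nat -> R) : R :=
  fsum n (fun i => (f i - g i) ^ 2).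
Definition l2sq2 (n : nat) (f g : nat -> nat -> R) : R :=
  fsum n (fun i => fsum n (fun j => (f i j - g i j) ^ 2)).

Definition dTV2 (k : nat) (p q : nat -> nat -> R) : R :=
  / 2 * fsum k (fun i => fsum k (fun j => Rabs (p i j - q i j))).

(* Write W(z|x) = (1 + alpha h_x(z)) / K, where h_x is the row phi(x) of H_K.  These rows
   are pairwise orthogonal with squared norm K and orthogonal to the all-ones row 0, so the
   map f |-> sum_x (1 + alpha h_x(z)) f(x) obeys the energy identity
     sum_z (sum_x (1 + alpha h_x(z)) f(x))^2 = K ((sum f)^2 + alpha^2 ||f||^2).
   T(p) - T(q) is K^-2 times this map applied in both coordinates to D = p - q.  Applying
   the identity once per coordinate produces the row sums and column sums of D (the
   marginal differences) and ||D||^2, while the (sum D)^2 term vanishes because p and q have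
   the same mass.  The TV bound then follows from Cauchy-Schwarz, ||D||_1 <= k ||D||_2. *)

From Stdlib Require Import Reals List Lia Lra.
Open Scope R_scope.

Lemma fold_right_Rplus_init l a : fold_right Rplus a l = fold_right Rplus 0 l + a.
Proof. induction l as [|x l IH]; simpl; [ring | rewrite IH; ring]. Qed.

Lemma fsum_S n f : fsum (S n) f = fsum n f + f n.
Proof.
  unfold fsum. rewrite seq_S, map_app, fold_right_app. simpl.
  rewrite fold_right_Rplus_init. ring.
Qed.

Lemma fsum_ext n f g : (forall i, (i < n)%nat -> f i = g i) -> fsum n f = fsum n g.
Proof.
  induction n as [|n IH]; intros Hfg; [reflexivity|].
  rewrite !fsum_S, IH by (intros; apply Hfg; lia). rewrite Hfg by lia. reflexivity.
Qed.

Lemma fsum_add n f g : fsum n (fun i => f i + g i) = fsum n f + fsum n g.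
Proof. induction n as [|n IH]; [cbn; ring|]. rewrite !fsum_S, IH. ring. Qed.

Lemma fsum_sub n f g : fsum n (fun i => f i - g i) = fsum n f - fsum n g.
Proof. induction n as [|n IH]; [cbn; ring|]. rewrite !fsum_S, IH. ring. Qed.

Lemma fsum_scal_l n c f : fsum n (fun i => c * f i) = c * fsum n f.
Proof. induction n as [|n IH]; [cbn; ring|]. rewrite !fsum_S, IH. ring. Qed.

Lemma fsum_scal_r n c f : fsum n (fun i => f i * c) = fsum n f * c.
Proof. induction n as [|n IH]; [cbn; ring|]. rewrite !fsum_S, IH. ring. Qed.

Lemma fsum_const n c : fsum n (fun _ => c) = INR n * c.
Proof. induction n as [|n IH]; [cbn; ring|]. rewrite !fsum_S, IH, S_INR. ring. Qed.

Lemma fsum_swap n m F :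
  fsum n (fun i => fsum m (F i)) = fsum m (fun j => fsum n (fun i => F i j)).
Proof.
  induction n as [|n IH].
  - cbn. rewrite fsum_const. ring.
  - rewrite fsum_S, IH, <- fsum_add. apply fsum_ext. intros. rewrite fsum_S. reflexivity.
Qed.

Lemma fsum_split a b f : fsum (a + b) f = fsum a f + fsum b (fun i => f (a + i)%nat).
Proof.
  induction b as [|b IH]; [rewrite Nat.add_0_r; cbn; ring|].
  rewrite Nat.add_succ_r, !fsum_S, IH. ring.
Qed.

Lemma fsum_mul_fsum n m f g :
  fsum n f * fsum m g = fsum n (fun i => fsum m (fun j => f i * g j)).
Proof.
  rewrite <- fsum_scal_r. apply fsum_ext. intros. symmetry. apply fsum_scal_l.
Qed.

Lemma fsum_le n f g : (forall i, (i < n)%nat -> f i <= g i) -> fsum n f <= fsum n g.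
Proof.
  induction n as [|n IH]; intros Hfg; [cbn; lra|].
  rewrite !fsum_S. apply Rplus_le_compat; [apply IH; intros|]; apply Hfg; lia.
Qed.

Lemma fsum_nonneg n f : (forall i, (i < n)%nat -> 0 <= f i) -> 0 <= fsum n f.
Proof.
  intros Hf. replace 0 with (fsum n (fun _ => 0)) by (rewrite fsum_const; ring).
  now apply fsum_le.
Qed.

Lemma fsum_delta n x g : (x < n)%nat ->
  fsum n (fun y => if Nat.eqb x y then g y else 0) = g x.
Proof.
  induction n as [|n IH]; intros Hx; [lia|].
  rewrite fsum_S. destruct (Nat.eqb_spec x n) as [<-|Hxn].
  - rewrite (fsum_ext _ _ (fun _ => 0)), fsum_const; [ring|].
    intros i Hi. destruct (Nat.eqb_spec x i); [lia | reflexivity].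
  - rewrite IH by lia. ring.
Qed.

Lemma fsum_Cauchy_Schwarz n f : fsum n f ^ 2 <= INR n * fsum n (fun i => f i ^ 2).
Proof.
  induction n as [|n IH]; [cbn; lra|].
  rewrite !fsum_S, S_INR.
  set (x := f n) in *. set (s := fsum n f) in *. set (s2 := fsum n (fun i => f i ^ 2)) in *.
  (* after expanding, the induction step reduces to 0 <= sum_i (f i - f n)^2 *)
  assert (Hcross : 0 <= s2 - 2 * x * s + INR n * x ^ 2).
  { replace (s2 - 2 * x * s + INR n * x ^ 2) with (fsum n (fun i => (f i - x) ^ 2)).
    - apply fsum_nonneg. intros. apply pow2_ge_0.
    - unfold s, s2. rewrite <- fsum_scal_l, <- fsum_const, <- fsum_sub, <- fsum_add.
      apply fsum_ext. intros. ring. }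
  nra.
Qed.

Lemma fsum2_abs_sq_le n F :
  fsum n (fun i => fsum n (fun j => Rabs (F i j))) ^ 2
  <= INR n ^ 2 * fsum n (fun i => fsum n (fun j => F i j ^ 2)).
Proof.
  eapply Rle_trans; [apply fsum_Cauchy_Schwarz|].
  replace (INR n ^ 2 * _) with (INR n * fsum n (fun i => INR n * fsum n (fun j => F i j ^ 2)))
    by (rewrite fsum_scal_l; ring).
  apply Rmult_le_compat_l; [apply pos_INR|].
  apply fsum_le. intros i _.
  eapply Rle_trans; [apply fsum_Cauchy_Schwarz|]. right. f_equal.
  apply fsum_ext. intros. now rewrite <- !Rsqr_pow2, <- Rsqr_abs.
Qed.

Lemma pow2_pos m : (0 < 2 ^ m)%nat.
Proof. apply Nat.neq_0_lt_0, Nat.pow_nonzero. lia. Qed.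

Lemma hadamard_pm1 m i j : hadamard m i j = 1 \/ hadamard m i j = -1.
Proof.
  revert i j; induction m as [|m IH]; intros i j; [now left|]. cbn [hadamard].
  destruct (i <? 2 ^ m)%nat, (j <? 2 ^ m)%nat; auto.
  destruct (IH (i - 2 ^ m)%nat (j - 2 ^ m)%nat) as [-> | ->]; [right | left]; ring.
Qed.

Lemma hadamard_row0 m j : hadamard m 0 j = 1.
Proof.
  revert j; induction m as [|m IH]; intros j; [reflexivity|]. cbn [hadamard].
  pose proof (pow2_pos m). destruct (Nat.ltb_spec 0 (2 ^ m)); [|lia].
  destruct (j <? 2 ^ m)%nat; apply IH.
Qed.

Definition hadamard_half m i : nat := if (i <? 2 ^ m)%nat then i else (i - 2 ^ m)%nat.
Definition hadamard_sign m i : R := if (i <? 2 ^ m)%nat then 1 else -1.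

Lemma hadamard_S_left m i z : (z < 2 ^ m)%nat ->
  hadamard (S m) i z = hadamard m (hadamard_half m i) z.
Proof.
  intros Hz. cbn [hadamard]. unfold hadamard_half.
  destruct (Nat.ltb_spec z (2 ^ m)); [|lia]. now destruct (i <? 2 ^ m)%nat.
Qed.

Lemma hadamard_S_right m i z :
  hadamard (S m) i (2 ^ m + z) = hadamard_sign m i * hadamard m (hadamard_half m i) z.
Proof.
  cbn [hadamard]. unfold hadamard_half, hadamard_sign.
  destruct (Nat.ltb_spec (2 ^ m + z) (2 ^ m)); [lia|].
  replace (2 ^ m + z - 2 ^ m)%nat with z by lia.
  destruct (i <? 2 ^ m)%nat; ring.
Qed.

Lemma hadamard_orthogonal m i j : (i < 2 ^ m)%nat -> (j < 2 ^ m)%nat ->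
  fsum (2 ^ m) (fun z => hadamard m i z * hadamard m j z) =
  if Nat.eqb i j then INR (2 ^ m) else 0.
Proof.
  revert i j; induction m as [|m IH]; intros i j Hi Hj.
  - simpl in Hi, Hj. replace i with 0%nat by lia. replace j with 0%nat by lia.
    unfold fsum. simpl. ring.
  - set (h := (2 ^ m)%nat) in *.
    assert (Hh : (2 ^ S m = h + h)%nat) by (cbn; lia).
    assert (Hhalf : forall l, (l < h + h)%nat -> (hadamard_half m l < h)%nat)
      by (intros l Hl; unfold hadamard_half; fold h; destruct (Nat.ltb_spec l h); lia).
    rewrite Hh in *. rewrite fsum_split, plus_INR.
    set (g z := hadamard m (hadamard_half m i) z * hadamard m (hadamard_half m j) z).
    rewrite (fsum_ext h (fun z => hadamard (S m) i z * hadamard (S m) j z) g)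
      by (intros; unfold g, h in *; now rewrite !hadamard_S_left).
    rewrite (fsum_ext h (fun z => hadamard (S m) i (h + z) * hadamard (S m) j (h + z))
               (fun z => hadamard_sign m i * hadamard_sign m j * g z))
      by (intros; unfold g, h; rewrite !hadamard_S_right; ring).
    unfold g.
    rewrite fsum_scal_l, IH by auto.
    unfold hadamard_half, hadamard_sign; fold h.
    destruct (Nat.ltb_spec i h), (Nat.ltb_spec j h),
      (Nat.eqb_spec i j), (Nat.eqb_spec (i - h) (j - h)), (Nat.eqb_spec i (j - h)),
      (Nat.eqb_spec (i - h) j); try lia; ring.
Qed.

Definition affine_transform (n : nat) (r : nat -> nat -> R) (a : R) (f : nat -> R) (z : nat) : R :=
  fsum n (fun x => (1 + a * r x z) * f x).

Lemma affine_transform_ext n r a f g z : (forall x, (x < n)%nat -> f x = g x) ->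
  affine_transform n r a f z = affine_transform n r a g z.
Proof. intros Hfg. apply fsum_ext. intros. now rewrite Hfg. Qed.

Lemma affine_transform_sub n r a f g z :
  affine_transform n r a (fun x => f x - g x) z
  = affine_transform n r a f z - affine_transform n r a g z.
Proof. unfold affine_transform. rewrite <- fsum_sub. apply fsum_ext. intros. ring. Qed.

Lemma fsum_affine_transform n m r a F z :
  fsum m (fun i => affine_transform n r a (F i) z)
  = affine_transform n r a (fun x => fsum m (fun i => F i x)) z.
Proof.
  unfold affine_transform. rewrite fsum_swap. apply fsum_ext. intros.
  apply fsum_scal_l.
Qed.

Section Energy.
Variables (n m : nat) (r : nat -> nat -> R).
Hypothesis r_orthogonal : forall x y, (x < n)%nat -> (y < n)%nat ->
  fsum m (fun z => r x z * r y z) = if Nat.eqb x y then INR m else 0.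
Hypothesis r_sum0 : forall x, (x < n)%nat -> fsum m (r x) = 0.

Lemma affine_row_gram a x y : (x < n)%nat -> (y < n)%nat ->
  fsum m (fun z => (1 + a * r x z) * (1 + a * r y z))
  = INR m * (1 + a ^ 2 * if Nat.eqb x y then 1 else 0).
Proof.
  intros Hx Hy.
  rewrite (fsum_ext m _ (fun z => (1 + a * r x z + a * r y z) + a ^ 2 * (r x z * r y z)))
    by (intros; ring).
  rewrite fsum_add, !fsum_add, fsum_const, !fsum_scal_l, r_orthogonal, !r_sum0 by auto.
  destruct (Nat.eqb x y); ring.
Qed.

Lemma affine_transform_energy a f :
  fsum m (fun z => affine_transform n r a f z ^ 2)
  = INR m * (fsum n f ^ 2 + a ^ 2 * fsum n (fun x => f x ^ 2)).
Proof.
  unfold affine_transform.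
  rewrite (fsum_ext m _ (fun z => fsum n (fun x => fsum n (fun y =>
              (1 + a * r x z) * f x * ((1 + a * r y z) * f y)))))
    by (intros; rewrite <- fsum_mul_fsum; ring).
  rewrite fsum_swap.
  rewrite (fsum_ext n _ (fun x => fsum n (fun y =>
              INR m * (f x * f y) + INR m * a ^ 2 * (if Nat.eqb x y then f x * f y else 0)))).
  2:{ intros x Hx. rewrite fsum_swap. apply fsum_ext. intros y Hy.
      rewrite (fsum_ext m _ (fun z => f x * f y * ((1 + a * r x z) * (1 + a * r y z))))
        by (intros; ring).
      rewrite fsum_scal_l, affine_row_gram by auto. destruct (Nat.eqb x y); ring. }
  rewrite (fsum_ext n _ (fun x => INR m * fsum n f * f x + INR m * a ^ 2 * f x ^ 2)).
  - rewrite fsum_add, !fsum_scal_l. ring.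
  - intros x Hx.
    rewrite fsum_add, !fsum_scal_l, (fsum_delta n x (fun y => f x * f y)) by auto.
    ring.
Qed.

Lemma affine_transform2_energy a D :
  fsum n (fun x1 => fsum n (D x1)) = 0 ->
  fsum m (fun z1 => fsum m (fun z2 =>
    affine_transform n r a (fun x1 => affine_transform n r a (D x1) z2) z1 ^ 2))
  = INR m ^ 2 * (a ^ 4 * fsum n (fun x1 => fsum n (fun x2 => D x1 x2 ^ 2))
      + a ^ 2 * (fsum n (fun x1 => fsum n (D x1) ^ 2)
                 + fsum n (fun x2 => fsum n (fun x1 => D x1 x2) ^ 2))).
Proof.
  intros Hmass0.
  set (col x2 := fsum n (fun x1 => D x1 x2)).
  assert (Hcol : fsum n col = 0) by (unfold col; now rewrite <- fsum_swap).
  rewrite fsum_swap.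
  rewrite (fsum_ext m _ (fun z2 => INR m *
             (affine_transform n r a col z2 ^ 2
              + a ^ 2 * fsum n (fun x1 => affine_transform n r a (D x1) z2 ^ 2)))).
  2:{ intros z2 _. rewrite affine_transform_energy, fsum_affine_transform. reflexivity. }
  rewrite fsum_scal_l, fsum_add, fsum_scal_l, affine_transform_energy, Hcol, (fsum_swap m n).
  rewrite (fsum_ext n (fun x1 => fsum m (fun z2 => affine_transform n r a (D x1) z2 ^ 2))
             (fun x1 => INR m * (fsum n (D x1) ^ 2 + a ^ 2 * fsum n (fun x2 => D x1 x2 ^ 2))))
    by (intros; apply affine_transform_energy).
  rewrite fsum_scal_l, fsum_add, fsum_scal_l.
  unfold col. ring.
Qed.
End Energy.

Definition hr_row (k : nat) (phi : nat -> nat) (x z : nat) : R := hadamard (logK k) (phi x) z.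

Lemma Kof_pos k : 0 < INR (Kof k).
Proof. apply lt_0_INR, pow2_pos. Qed.

Lemma HR_W_affine k eps phi z x :
  HR_W k eps phi z x = / INR (Kof k) * (1 + alphaH eps * hr_row k phi x z).
Proof.
  unfold HR_W, alphaH, hr_row. pose proof (Kof_pos k). pose proof (exp_pos eps).
  destruct (Req_EM_T (hadamard (logK k) (phi x) z) 1) as [-> | Hne].
  - field. lra.
  - destruct (hadamard_pm1 (logK k) (phi x) z) as [Heq | ->]; [contradiction|].
    field. lra.
Qed.

Lemma HR_T_affine k eps phi p z1 z2 :
  HR_T k eps phi p z1 z2
  = (/ INR (Kof k)) ^ 2 * affine_transform k (hr_row k phi) (alphaH eps)
      (fun x1 => affine_transform k (hr_row k phi) (alphaH eps) (p x1) z2) z1.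
Proof.
  unfold HR_T, affine_transform. rewrite <- fsum_scal_l. apply fsum_ext. intros x1 _.
  rewrite <- !fsum_scal_l. apply fsum_ext. intros x2 _.
  rewrite !HR_W_affine. ring.
Qed.

Lemma HR_T_sub k eps phi p q z1 z2 :
  HR_T k eps phi p z1 z2 - HR_T k eps phi q z1 z2
  = (/ INR (Kof k)) ^ 2 * affine_transform k (hr_row k phi) (alphaH eps)
      (fun x1 => affine_transform k (hr_row k phi) (alphaH eps)
                   (fun x2 => p x1 x2 - q x1 x2) z2) z1.
Proof.
  rewrite !HR_T_affine, <- Rmult_minus_distr_l, <- affine_transform_sub. f_equal.
  apply affine_transform_ext. intros. now rewrite <- affine_transform_sub.
Qed.

Lemma alphaH_pos eps : 0 < eps -> 0 < alphaH eps.
Proof.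
  intros Heps. unfold alphaH. pose proof (exp_increasing 0 eps Heps) as Hexp.
  rewrite exp_0 in Hexp. apply Rdiv_lt_0_compat; lra.
Qed.

Lemma l2sq1_nonneg n f g : 0 <= l2sq1 n f g.
Proof. apply fsum_nonneg. intros. apply pow2_ge_0. Qed.

Lemma dTV2_sq_le_l2sq2 k p q : (2 * dTV2 k p q) ^ 2 <= INR k ^ 2 * l2sq2 k p q.
Proof.
  unfold dTV2. replace (2 * (/ 2 * _)) with
    (fsum k (fun i => fsum k (fun j => Rabs (p i j - q i j)))) by field.
  apply (fsum2_abs_sq_le k (fun i j => p i j - q i j)).
Qed.

Section HadamardResponse.
Variables (k : nat) (phi : nat -> nat).
Hypothesis phi_valid : valid_phi k phi.

Lemma hr_row_orthogonal x y : (x < k)%nat -> (y < k)%nat ->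
  fsum (Kof k) (fun z => hr_row k phi x z * hr_row k phi y z)
  = if Nat.eqb x y then INR (Kof k) else 0.
Proof.
  destruct phi_valid as [Hrange Hinj]. intros Hx Hy.
  unfold hr_row, Kof. rewrite hadamard_orthogonal by (apply Hrange; auto).
  destruct (Nat.eqb_spec (phi x) (phi y)) as [E | E], (Nat.eqb_spec x y); auto.
  - now apply Hinj in E.
  - now subst.
Qed.

(* Row 0 of H_K is all ones and [phi] avoids it, so each selected row sums to 0. *)
Lemma hr_row_sum0 x : (x < k)%nat -> fsum (Kof k) (hr_row k phi x) = 0.
Proof.
  destruct phi_valid as [Hrange _]. intros Hx. specialize (Hrange x Hx).
  rewrite (fsum_ext _ _ (fun z => hadamard (logK k) 0 z * hadamard (logK k) (phi x) z))
    by (intros; rewrite hadamard_row0; unfold hr_row; ring).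
  unfold Kof in *. rewrite hadamard_orthogonal by lia.
  destruct (Nat.eqb_spec 0 (phi x)); [lia | reflexivity].
Qed.

Lemma HR_T_l2_identity eps p q :
  fsum k (fun x1 => fsum k (p x1)) = fsum k (fun x1 => fsum k (q x1)) ->
  l2sq2 (Kof k) (HR_T k eps phi p) (HR_T k eps phi q) =
    alphaH eps ^ 4 / INR (Kof k) ^ 2 * l2sq2 k p q
    + alphaH eps ^ 2 / INR (Kof k) ^ 2 *
        (l2sq1 k (marg1 k p) (marg1 k q) + l2sq1 k (marg2 k p) (marg2 k q)).
Proof.
  intros Hmass.
  assert (Hmass0 : fsum k (fun x1 => fsum k (fun x2 => p x1 x2 - q x1 x2)) = 0).
  { rewrite (fsum_ext k _ (fun x1 => fsum k (p x1) - fsum k (q x1)))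
      by (intros; apply fsum_sub).
    rewrite fsum_sub, Hmass. ring. }
  unfold l2sq2 at 1.
  rewrite (fsum_ext _ _ (fun z1 => (/ INR (Kof k)) ^ 4 * fsum (Kof k) (fun z2 =>
             affine_transform k (hr_row k phi) (alphaH eps)
               (fun x1 => affine_transform k (hr_row k phi) (alphaH eps)
                            (fun x2 => p x1 x2 - q x1 x2) z2) z1 ^ 2))).
  2:{ intros. rewrite <- fsum_scal_l. apply fsum_ext. intros. rewrite HR_T_sub. ring. }
  rewrite fsum_scal_l, affine_transform2_energy by auto using hr_row_orthogonal, hr_row_sum0.
  assert (Hmarg1 : l2sq1 k (marg1 k p) (marg1 k q)
                   = fsum k (fun x1 => fsum k (fun x2 => p x1 x2 - q x1 x2) ^ 2))
    by (apply fsum_ext; intros; unfold marg1; now rewrite fsum_sub).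
  assert (Hmarg2 : l2sq1 k (marg2 k p) (marg2 k q)
                   = fsum k (fun x2 => fsum k (fun x1 => p x1 x2 - q x1 x2) ^ 2))
    by (apply fsum_ext; intros; unfold marg2; now rewrite fsum_sub).
  rewrite Hmarg1, Hmarg2.
  pose proof (Kof_pos k). unfold l2sq2. field. lra.
Qed.

Lemma HR_T_l2_gt_dTV2 eps p q gamma :
  (1 <= k)%nat -> 0 < eps ->
  fsum k (fun x1 => fsum k (p x1)) = fsum k (fun x1 => fsum k (q x1)) ->
  dTV2 k p q > gamma ->
  sqrt (l2sq2 (Kof k) (HR_T k eps phi p) (HR_T k eps phi q))
  > 2 * alphaH eps ^ 2 * gamma / (INR (Kof k) * INR k).
Proof.
  intros Hk Heps Hmass Hgamma. rewrite HR_T_l2_identity by exact Hmass.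
  pose proof (alphaH_pos eps Heps) as Ha.
  set (a := alphaH eps) in *. set (K := INR (Kof k)). set (d := dTV2 k p q) in *.
  assert (HK : 0 < K) by apply Kof_pos.
  assert (Hkpos : 0 < INR k) by (apply lt_0_INR; lia).
  assert (Hmarg : 0 <= l2sq1 k (marg1 k p) (marg1 k q) + l2sq1 k (marg2 k p) (marg2 k q))
    by (pose proof (l2sq1_nonneg k (marg1 k p) (marg1 k q));
        pose proof (l2sq1_nonneg k (marg2 k p) (marg2 k q)); lra).
  assert (Hd : (2 * d / INR k) ^ 2 <= l2sq2 k p q).
  { pose proof (dTV2_sq_le_l2sq2 k p q) as Htv. fold d in Htv.
    replace ((2 * d / INR k) ^ 2) with ((2 * d) ^ 2 / INR k ^ 2) by (field; lra).
    apply Rmult_le_reg_r with (INR k ^ 2); [nra|].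
    replace ((2 * d) ^ 2 / INR k ^ 2 * INR k ^ 2) with ((2 * d) ^ 2) by (field; lra). lra. }
  set (X := a ^ 2 / K * (2 * d / INR k)).
  apply Rlt_le_trans with X.
  - unfold X. apply Rlt_gt, Rlt_0_minus.
    replace (_ - _) with (2 * a ^ 2 / (K * INR k) * (d - gamma)) by (field; lra).
    apply Rmult_lt_0_compat; [apply Rdiv_lt_0_compat|]; nra.
  - eapply Rle_trans; [apply Rle_abs|]. rewrite <- sqrt_Rsqr_abs, Rsqr_pow2.
    apply sqrt_le_1_alt.
    replace (X ^ 2) with (a ^ 4 / K ^ 2 * (2 * d / INR k) ^ 2) by (unfold X; field; lra).
    assert (Hc4 : 0 <= a ^ 4 / K ^ 2) by (apply Rlt_le, Rdiv_lt_0_compat; [apply pow_lt|]; nra).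
    assert (Hc2 : 0 <= a ^ 2 / K ^ 2) by (apply Rlt_le, Rdiv_lt_0_compat; nra).
    pose proof (Rmult_le_compat_l _ _ _ Hc4 Hd).
    pose proof (Rmult_le_pos _ _ Hc2 Hmarg).
    lra.
Qed.
End HadamardResponse.

Theorem lemma6p4 (k : nat) (eps : R) (phi : nat -> nat)
    (p q : nat -> nat -> R) :
  (1 <= k)%nat -> 0 < eps -> valid_phi k phi ->
  is_dist2 k p -> is_dist2 k q ->
  let K := INR (Kof k) in
  let T := HR_T k eps phi in
  l2sq2 (Kof k) (T p) (T q) =
    alphaH eps ^ 4 / K ^ 2 * l2sq2 k p q
    + alphaH eps ^ 2 / K ^ 2 *
        (l2sq1 k (marg1 k p) (marg1 k q) + l2sq1 k (marg2 k p) (marg2 k q))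
  /\
  (forall gamma : R, dTV2 k p q > gamma ->
     sqrt (l2sq2 (Kof k) (T p) (T q)) > 2 * alphaH eps ^ 2 * gamma / (K * INR k)).
Proof.
  intros Hk Heps Hphi [_ Hp] [_ Hq] K T.
  assert (Hmass := eq_trans Hp (eq_sym Hq)).
  split.
  - exact (HR_T_l2_identity k phi Hphi eps p q Hmass).
  - intros gamma Hgamma. exact (HR_T_l2_gt_dTV2 k phi Hphi eps p q gamma Hk Heps Hmass Hgamma).
Qed.
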